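(* Let $(X,G)$ be a minimal system with finite minimal rank $mr$. Then $cr=\#\pi_{max}^{-1}(x)$ for every fiber distal point $x\in X_{max}$. Moreover, $X_{max}^{distal}=\{x\in X_{max}:\#\pi_{max}^{-1}(x)=cr\}$, and $cr=mr$ whenever $X_{max}$ contains a fiber distal point.
   Context: Let $X$ be a compact metric space with metric $d$ and $G$ a locally compact abelian group acting continuously and minimally on $X$, written $t\cdot x$. Points $x,y$ are proximal if $\inf_{t\in G}d(t\cdot x,t\cdot y)=0$. Let $\pi_{max}:X\to X_{max}$ be the maximal equicontinuous factor. For $x\in X_{max}$, $\delta>0$, $cr(x,\delta)$ is the maximal cardinality $l$ of a set $\{x_1,\dots,x_l\}\subset\pi_{max}^{-1}(x)$ with $\inf_{t\in G}d(t\cdot x_i,t\cdot x_j)\ge\delta$ for $i\neq j$; the coincidence rank is $cr=\lim_{\delta\to0^+}cr(x,\delta)$ (independent of $x$). The minimal rank is $mr=\inf\{\#\pi_{max}^{-1}(x):x\in X_{max}\}$. A point $x\in X$ is distal if it is not proximal to any $y\neq x$; a point $x\in X_{max}$ is fiber distal if every point of $\pi_{max}^{-1}(x)$ is distal; $X_{max}^{distal}$ denotes the set of fiber distal points. *)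

From Stdlib Require Import Reals List.
Open Scope R_scope.
Set Implicit Arguments.

Definition is_metric {X : Type} (d : X -> X -> R) : Prop :=
  (forall x y, 0 <= d x y) /\
  (forall x y, d x y = 0 <-> x = y) /\
  (forall x y, d x y = d y x) /\
  (forall x y z, d x z <= d x y + d y z).

Definition metric_open {X : Type} (d : X -> X -> R) (U : X -> Prop) : Prop :=
  forall x, U x -> exists e, 0 < e /\ forall y, d x y < e -> U y.

Definition metric_closed {X : Type} (d : X -> X -> R) (A : X -> Prop) : Prop :=
  metric_open d (fun x => ~ A x).

Definition compact_metric_space {X : Type} (d : X -> X -> R) : Prop :=
  is_metric d /\
  forall (I : Type) (U : I -> X -> Prop),
    (forall i, metric_open d (U i)) ->
    (forall x, exists i, U i x) ->
    exists l : list I, forall x, exists i, In i l /\ U i x.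

Definition metric_continuous {X Y : Type} (dX : X -> X -> R) (dY : Y -> Y -> R)
  (f : X -> Y) : Prop :=
  forall x eps, 0 < eps -> exists delta, 0 < delta /\
    forall x', dX x x' < delta -> dY (f x) (f x') < eps.

Definition is_topology {G : Type} (opn : (G -> Prop) -> Prop) : Prop :=
  opn (fun _ => True) /\ opn (fun _ => False) /\
  (forall U V, opn U -> opn V -> opn (fun x => U x /\ V x)) /\
  (forall (I : Type) (F : I -> G -> Prop),
      (forall i, opn (F i)) -> opn (fun x => exists i, F i x)).

Definition is_hausdorff {G : Type} (opn : (G -> Prop) -> Prop) : Prop :=
  forall x y, x <> y -> exists U V, opn U /\ opn V /\ U x /\ V y /\
    forall z, U z -> V z -> False.

Definition top_compact_subset {G : Type} (opn : (G -> Prop) -> Prop) (K : G -> Prop) : Prop :=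
  forall (I : Type) (F : I -> G -> Prop),
    (forall i, opn (F i)) ->
    (forall x, K x -> exists i, F i x) ->
    exists l : list I, forall x, K x -> exists i, In i l /\ F i x.

Definition locally_compact {G : Type} (opn : (G -> Prop) -> Prop) : Prop :=
  forall g, exists (U K : G -> Prop), opn U /\ U g /\ (forall x, U x -> K x) /\
    top_compact_subset opn K.

Definition is_abelian_group {G : Type} (op : G -> G -> G) (e : G) (inv : G -> G) : Prop :=
  (forall a b c, op a (op b c) = op (op a b) c) /\
  (forall a b, op a b = op b a) /\
  (forall a, op e a = a) /\
  (forall a, op (inv a) a = e).

Definition is_LCA_group {G : Type} (op : G -> G -> G) (e : G) (inv : G -> G)
  (opn : (G -> Prop) -> Prop) : Prop :=
  is_abelian_group op e inv /\ is_topology opn /\ is_hausdorff opn /\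
  locally_compact opn /\
  (forall g h W, opn W -> W (op g h) ->
     exists U V, opn U /\ opn V /\ U g /\ V h /\
       forall g' h', U g' -> V h' -> W (op g' h')) /\
  (forall g W, opn W -> W (inv g) ->
     exists U, opn U /\ U g /\ forall g', U g' -> W (inv g')).

Definition is_continuous_action {G X : Type} (op : G -> G -> G) (e : G)
  (opn : (G -> Prop) -> Prop) (d : X -> X -> R) (act : G -> X -> X) : Prop :=
  (forall x, act e x = x) /\
  (forall g h x, act (op g h) x = act g (act h x)) /\
  (forall g x eps, 0 < eps -> exists (U : G -> Prop) delta,
      opn U /\ U g /\ 0 < delta /\
      forall g' x', U g' -> d x x' < delta -> d (act g x) (act g' x') < eps).

Definition invariant_set {G X : Type} (act : G -> X -> X) (A : X -> Prop) : Prop :=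
  forall t x, A x -> A (act t x).

Definition minimal_action {G X : Type} (d : X -> X -> R) (act : G -> X -> X) : Prop :=
  forall A : X -> Prop, metric_closed d A -> invariant_set act A ->
    (exists x, A x) -> forall x, A x.

Definition is_factor {G X Y : Type} (op : G -> G -> G) (e : G) (opn : (G -> Prop) -> Prop)
  (d : X -> X -> R) (act : G -> X -> X)
  (dY : Y -> Y -> R) (actY : G -> Y -> Y) (pi : X -> Y) : Prop :=
  compact_metric_space dY /\ is_continuous_action op e opn dY actY /\
  metric_continuous d dY pi /\ (forall y, exists x, pi x = y) /\
  (forall t x, pi (act t x) = actY t (pi x)).

Definition equicontinuous {G Y : Type} (dY : Y -> Y -> R) (actY : G -> Y -> Y) : Prop :=
  forall eps, 0 < eps -> exists delta, 0 < delta /\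
    forall y y', dY y y' < delta -> forall t, dY (actY t y) (actY t y') < eps.

Definition is_max_equicontinuous_factor {G X Y : Type} (op : G -> G -> G) (e : G)
  (opn : (G -> Prop) -> Prop) (d : X -> X -> R) (act : G -> X -> X)
  (dY : Y -> Y -> R) (actY : G -> Y -> Y) (pi : X -> Y) : Prop :=
  is_factor op e opn d act dY actY pi /\ equicontinuous dY actY /\
  forall (Z : Type) (dZ : Z -> Z -> R) (actZ : G -> Z -> Z) (psi : X -> Z),
    is_factor op e opn d act dZ actZ psi -> equicontinuous dZ actZ ->
    exists phi : Y -> Z, metric_continuous dY dZ phi /\ forall x, psi x = phi (pi x).

Definition proximal {G X : Type} (d : X -> X -> R) (act : G -> X -> X) (x y : X) : Prop :=
  forall eps, 0 < eps -> exists t, d (act t x) (act t y) < eps.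

Definition distal_point {G X : Type} (d : X -> X -> R) (act : G -> X -> X) (x : X) : Prop :=
  forall y, proximal d act x y -> y = x.

Definition fiber_distal {G X Y : Type} (d : X -> X -> R) (act : G -> X -> X)
  (pi : X -> Y) (y : Y) : Prop :=
  forall x, pi x = y -> distal_point d act x.

Definition fiber_card {X Y : Type} (pi : X -> Y) (y : Y) (n : nat) : Prop :=
  exists l : list X, NoDup l /\ length l = n /\ forall x, pi x = y <-> In x l.

Definition sep_fiber_set {G X Y : Type} (d : X -> X -> R) (act : G -> X -> X)
  (pi : X -> Y) (y : Y) (delta : R) (l : list X) : Prop :=
  NoDup l /\ (forall x, In x l -> pi x = y) /\
  forall a b, In a l -> In b l -> a <> b -> forall t, delta <= d (act t a) (act t b).

Definition cr_at {G X Y : Type} (d : X -> X -> R) (act : G -> X -> X)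
  (pi : X -> Y) (y : Y) (delta : R) (n : nat) : Prop :=
  (exists l, sep_fiber_set d act pi y delta l /\ length l = n) /\
  forall l, sep_fiber_set d act pi y delta l -> (length l <= n)%nat.

(* lim_{delta -> 0+} cr(y, delta) = n  (integer-valued, so eventually equal) *)
Definition cr_limit {G X Y : Type} (d : X -> X -> R) (act : G -> X -> X)
  (pi : X -> Y) (y : Y) (n : nat) : Prop :=
  exists delta0, 0 < delta0 /\ forall delta, 0 < delta -> delta < delta0 ->
    cr_at d act pi y delta n.

(* mr = n : infimum of fiber cardinalities (infinite fibers are >= every n) *)
Definition min_rank {X Y : Type} (pi : X -> Y) (n : nat) : Prop :=
  (exists y, fiber_card pi y n) /\ forall y m, fiber_card pi y m -> (n <= m)%nat.

Definition finite_min_rank {X Y : Type} (pi : X -> Y) : Prop :=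
  exists y n, fiber_card pi y n.

(* Let pi : X -> Xmax be the maximal equicontinuous factor of a minimal system.
   1. Equicontinuous systems are distal and continuous equivariant maps preserve
      proximality, so proximal points of X lie in a common fibre of pi.
   2. By density of orbits and sequential compactness, a delta-separated subset of
      one fibre can be transported to a delta-separated subset of the same size in
      any other fibre.  Hence separated sets are no larger than a finite fibre, and
      the largest size [cr] of a separated set (over all fibres and thresholds) is
      the value of cr(x, delta) for every x and every small delta.
   3. Over a fibre-distal point a maximal separated set exhausts the fibre, so the
      fibre has cr points; conversely a fibre with cr points is itself separated,
      so by step 1 it contains no proximal pair; and every fibre has >= cr points. *)

From Stdlib Require Import Reals List Lra Lia Classical ClassicalEpsilon.
Open Scope R_scope.

Lemma inv_succ_eventually_small (eps : R) :
  0 < eps -> exists N, forall n, (N <= n)%nat -> / INR (S n) < eps.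
Proof.
  intros Heps. destruct (INR_archimed eps 1 Heps) as [N HN]. exists N. intros n Hn.
  assert (Hpos : 0 < INR (S n)) by (apply lt_0_INR; lia).
  assert (HNn : INR N <= INR n) by (apply le_INR; lia).
  rewrite S_INR in *.
  apply (Rmult_lt_reg_l (INR n + 1)); [lra|]. rewrite Rinv_r; [nra|lra].
Qed.

Lemma inv_succ_pos (n : nat) : 0 < / INR (S n).
Proof. apply Rinv_0_lt_compat, lt_0_INR. lia. Qed.

Lemma metric_eq_of_small {X : Type} (d : X -> X -> R) :
  is_metric d -> forall p q, (forall eps, 0 < eps -> d p q < eps) -> p = q.
Proof.
  intros [Hpos [Hzero _]] p q Hsmall. apply Hzero.
  destruct (Req_dec (d p q) 0) as [E|E]; [exact E|].
  specialize (Hpos p q). specialize (Hsmall (d p q)). lra.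
Qed.

Lemma ball_open {X : Type} (d : X -> X -> R) (z : X) (r : R) :
  is_metric d -> metric_open d (fun w => d z w < r).
Proof.
  intros [_ [_ [_ Htri]]] w Hw. exists (r - d z w). split; [lra|].
  intros y Hy. specialize (Htri z w y). lra.
Qed.

Lemma list_bound {A : Type} (f : A -> nat) (l : list A) :
  exists M, forall i, In i l -> (f i <= M)%nat.
Proof.
  induction l as [|h l [M HM]]; [exists 0%nat; intros i []|].
  exists (Nat.max (f h) M). intros i [<-|Hi]; [lia|]. specialize (HM i Hi). lia.
Qed.

Lemma list_common_threshold {A : Type} (Q : A -> R -> Prop) (l : list A) :
  (forall b e e', Q b e -> e' <= e -> Q b e') ->
  (forall b, In b l -> exists e, 0 < e /\ Q b e) ->
  exists e, 0 < e /\ forall b, In b l -> Q b e.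
Proof.
  intros Hmon. induction l as [|h l IH]; intros H.
  - exists 1. split; [lra|]. intros b [].
  - destruct IH as [e1 [He1 H1]]; [intros b Hb; apply H; right; exact Hb|].
    destruct (H h (or_introl eq_refl)) as [e2 [He2 H2]].
    exists (Rmin e1 e2). split; [apply Rmin_pos; assumption|].
    intros b [<-|Hb].
    + apply (Hmon _ e2); [exact H2|apply Rmin_r].
    + apply (Hmon _ e1); [exact (H1 b Hb)|apply Rmin_l].
Qed.

Lemma bounded_max (P : nat -> Prop) (m : nat) :
  P 0%nat -> (forall k, P k -> (k <= m)%nat) ->
  exists c, P c /\ forall k, P k -> (k <= c)%nat.
Proof.
  intros H0. induction m as [|m IH]; intros Hb; [exists 0%nat; split; assumption|].
  destruct (classic (P (S m))) as [Hp|Hp]; [exists (S m); split; assumption|].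
  apply IH. intros k Hk. specialize (Hb k Hk).
  destruct (Nat.eq_dec k (S m)); [subst; contradiction|lia].
Qed.

Definition converges {X : Type} (d : X -> X -> R) (v : nat -> X) (z : X) : Prop :=
  forall eps, 0 < eps -> exists N, forall n, (N <= n)%nat -> d z (v n) < eps.

Definition tends_to_infinity (phi : nat -> nat) : Prop :=
  forall N, exists M, forall n, (M <= n)%nat -> (N <= phi n)%nat.

Lemma converges_subseq {X : Type} (d : X -> X -> R) (v : nat -> X) (z : X) (phi : nat -> nat) :
  converges d v z -> tends_to_infinity phi -> converges d (fun n => v (phi n)) z.
Proof.
  intros Hv Hphi eps Heps. destruct (Hv eps Heps) as [N HN]. destruct (Hphi N) as [M HM].
  exists M. intros n Hn. apply HN, HM, Hn.
Qed.

Lemma tends_to_infinity_comp (phi psi : nat -> nat) :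
  tends_to_infinity phi -> tends_to_infinity psi -> tends_to_infinity (fun n => phi (psi n)).
Proof.
  intros H1 H2 N. destruct (H1 N) as [M1 HM1]. destruct (H2 M1) as [M2 HM2].
  exists M2. intros n Hn. apply HM1, HM2, Hn.
Qed.

Lemma converges_of_inv_succ {X : Type} (d : X -> X -> R) (v : nat -> X) (z : X) :
  (forall n, d z (v n) < / INR (S n)) -> converges d v z.
Proof.
  intros Hv eps Heps. destruct (inv_succ_eventually_small eps Heps) as [N HN].
  exists N. intros n Hn. specialize (HN n Hn). specialize (Hv n). lra.
Qed.

Lemma limits_of_equal_sequences {X : Type} (d : X -> X -> R) (u v : nat -> X) (p q : X) :
  is_metric d -> (forall n, u n = v n) -> converges d u p -> converges d v q -> p = q.
Proof.
  intros Hd Huv Hu Hv. pose proof Hd as [_ [_ [Hsym Htri]]].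
  apply (metric_eq_of_small d Hd). intros eps Heps.
  destruct (Hu (eps/2)) as [N1 HN1]; [lra|]. destruct (Hv (eps/2)) as [N2 HN2]; [lra|].
  specialize (HN1 (Nat.max N1 N2) ltac:(lia)). specialize (HN2 (Nat.max N1 N2) ltac:(lia)).
  rewrite Huv in HN1. specialize (Htri p (v (Nat.max N1 N2)) q).
  rewrite (Hsym (v _) q) in Htri. lra.
Qed.

Lemma converges_continuous {X Y : Type} (dX : X -> X -> R) (dY : Y -> Y -> R)
  (f : X -> Y) (v : nat -> X) (z : X) :
  metric_continuous dX dY f -> converges dX v z -> converges dY (fun n => f (v n)) (f z).
Proof.
  intros Hf Hv eps Heps. destruct (Hf z eps Heps) as [delta [Hdelta Hz]].
  destruct (Hv delta Hdelta) as [N HN]. exists N. intros n Hn. apply Hz, HN, Hn.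
Qed.

Lemma converges_dist_lower_bound {X : Type} (d : X -> X -> R) (u v : nat -> X) (p q : X) (delta : R) :
  is_metric d -> converges d u p -> converges d v q ->
  (forall n, delta <= d (u n) (v n)) -> delta <= d p q.
Proof.
  intros [_ [_ [Hsym Htri]]] Hu Hv Hbound. apply Rnot_lt_le. intro Hlt.
  set (eps := (delta - d p q) / 2).
  destruct (Hu eps) as [N1 HN1]; [unfold eps; lra|].
  destruct (Hv eps) as [N2 HN2]; [unfold eps; lra|].
  set (n := Nat.max N1 N2).
  specialize (HN1 n ltac:(unfold n; lia)). specialize (HN2 n ltac:(unfold n; lia)).
  specialize (Hbound n).
  pose proof (Htri (u n) p (v n)). pose proof (Htri p q (v n)).
  rewrite (Hsym (u n) p) in *. unfold eps in *. lra.
Qed.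

Lemma compact_cluster_point {X : Type} (d : X -> X -> R) :
  compact_metric_space d -> forall u : nat -> X,
  exists z, forall r, 0 < r -> forall N, exists n, (N <= n)%nat /\ d z (u n) < r.
Proof.
  intros [Hd Hcover] u. apply NNPP. intro Hno.
  (* otherwise every point has a ball that the sequence eventually avoids *)
  assert (Havoid : forall z, exists r N, 0 < r /\ forall n, (N <= n)%nat -> r <= d z (u n)).
  { intro z. apply NNPP; intro H1. apply Hno. exists z. intros r Hr N.
    apply NNPP; intro H2. apply H1. exists r, N. split; [exact Hr|]. intros n Hn.
    apply Rnot_lt_le. intro H3. apply H2. exists n; split; assumption. }
  set (I := {q : X * R * nat | 0 < snd (fst q) /\
             forall n, (snd q <= n)%nat -> snd (fst q) <= d (fst (fst q)) (u n)}).
  destruct (Hcover I (fun i w => d (fst (fst (proj1_sig i))) w < snd (fst (proj1_sig i))))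
    as [l Hl].
  - intro i. apply ball_open, Hd.
  - intro x. destruct (Havoid x) as [r [N [Hr HN]]].
    exists (exist _ (x, r, N) (conj Hr HN)). simpl.
    destruct Hd as [_ [Hzero _]]. rewrite (proj2 (Hzero x x) eq_refl). exact Hr.
  - (* a finite subcover is avoided by the sequence from some index on *)
    destruct (list_bound (fun i : I => snd (proj1_sig i)) l) as [M HM].
    destruct (Hl (u M)) as [i [Hi Hu]]. specialize (HM i Hi).
    destruct (proj2_sig i) as [_ HN]. specialize (HN M HM). lra.
Qed.

Lemma compact_convergent_subseq {X : Type} (d : X -> X -> R) :
  compact_metric_space d -> forall u : nat -> X,
  exists phi z, tends_to_infinity phi /\ converges d (fun n => u (phi n)) z.
Proof.
  intros Hc u. destruct (compact_cluster_point d Hc u) as [z Hz].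
  destruct (choice (fun k n => (k <= n)%nat /\ d z (u n) < / INR (S k))) as [phi Hphi].
  { intro k. apply Hz, inv_succ_pos. }
  exists phi, z. split.
  - intros N. exists N. intros n Hn. specialize (Hphi n). lia.
  - apply converges_of_inv_succ. intro n. apply Hphi.
Qed.

Lemma compact_simultaneous_subseq {A X : Type} (d : X -> X -> R) :
  compact_metric_space d -> forall (U : A -> nat -> X) (l : list A),
  exists phi, tends_to_infinity phi /\
    forall a, In a l -> exists z, converges d (fun n => U a (phi n)) z.
Proof.
  intros Hc U l. induction l as [|h l [phi [Hphi IH]]].
  - exists (fun n => n). split; [intros N; exists N; auto|]. intros a [].
  - destruct (compact_convergent_subseq d Hc (fun n => U h (phi n))) as [psi [z [Hpsi Hz]]].
    exists (fun n => phi (psi n)). split; [apply tends_to_infinity_comp; assumption|].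
    intros a [<-|Ha]; [exists z; exact Hz|].
    destruct (IH a Ha) as [za Hza]. exists za.
    exact (converges_subseq d (fun n => U a (phi n)) za psi Hza Hpsi).
Qed.

Section Dynamics.

Context {G X : Type}.
Variables (op : G -> G -> G) (e : G) (opn : (G -> Prop) -> Prop).
Variables (d : X -> X -> R) (act : G -> X -> X).
Hypothesis HX : compact_metric_space d.
Hypothesis Hact : is_continuous_action op e opn d act.

Lemma act_continuous (s : G) : metric_continuous d d (act s).
Proof.
  destruct Hact as [_ [_ Hjoint]]. intros z eps Heps.
  destruct (Hjoint s z eps Heps) as [U [delta [_ [Hs [Hdelta H]]]]].
  exists delta. split; [exact Hdelta|]. intros z' Hz'. apply H; assumption.
Qed.

(* In a minimal system every orbit is dense: the orbit closure is a nonempty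
   closed invariant set. *)
Lemma minimal_orbit_dense :
  minimal_action d act -> forall a b eps, 0 < eps -> exists t, d b (act t a) < eps.
Proof.
  intros Hmin a b. pose proof (proj1 HX) as [_ [Hzero [_ Htri]]].
  pose proof Hact as [Hunit [Hcomp _]].
  apply (Hmin (fun z => forall eps, 0 < eps -> exists t, d z (act t a) < eps)).
  - intros z Hnz.
    assert (Hfar : exists r, 0 < r /\ forall t, r <= d z (act t a)).
    { apply NNPP; intro H1. apply Hnz. intros eps Heps. apply NNPP; intro H2. apply H1.
      exists eps. split; [exact Heps|]. intro t. apply Rnot_lt_le. intro H3.
      apply H2. exists t; exact H3. }
    destruct Hfar as [r [Hr Hfar]]. exists (r/2). split; [lra|].
    intros y Hy Hclose. destruct (Hclose (r/2)) as [t Ht]; [lra|].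
    specialize (Hfar t). specialize (Htri z y (act t a)). lra.
  - intros s z Hz eps Heps. destruct (act_continuous s z eps Heps) as [delta [Hdelta H]].
    destruct (Hz delta Hdelta) as [t Ht]. exists (op s t). rewrite Hcomp. apply H, Ht.
  - exists a. intros eps Heps. exists e. rewrite Hunit, (proj2 (Hzero a a) eq_refl). exact Heps.
Qed.

Lemma factor_preserves_proximal {Y : Type} (dY : Y -> Y -> R) (actY : G -> Y -> Y) (pi : X -> Y) :
  is_metric dY -> metric_continuous d dY pi -> (forall t x, pi (act t x) = actY t (pi x)) ->
  forall a y, proximal d act a y -> proximal dY actY (pi a) (pi y).
Proof.
  intros [_ [_ [HYsym HYtri]]] Hpi Hequiv a y Hprox eps Heps.
  pose proof (proj1 HX) as [_ [_ [_ Htri]]].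
  destruct (choice (fun n t => d (act t a) (act t y) < / INR (S n))) as [T HT].
  { intro n. apply Hprox, inv_succ_pos. }
  destruct (compact_cluster_point d HX (fun n => act (T n) a)) as [z Hz].
  destruct (Hpi z (eps/2)) as [rho [Hrho Hnear]]; [lra|].
  destruct (inv_succ_eventually_small (rho/2)) as [K HK]; [lra|].
  destruct (Hz (rho/2) ltac:(lra) K) as [n [Hn Hzn]].
  exists (T n). rewrite <- !Hequiv. specialize (HK n Hn). specialize (HT n).
  assert (Hza : d z (act (T n) a) < rho) by lra.
  assert (Hzy : d z (act (T n) y) < rho).
  { specialize (Htri z (act (T n) a) (act (T n) y)). lra. }
  pose proof (Hnear _ Hza). pose proof (Hnear _ Hzy).
  specialize (HYtri (pi (act (T n) a)) (pi z) (pi (act (T n) y))).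
  rewrite (HYsym _ (pi z)) in HYtri. lra.
Qed.

(* Given a [delta]-separated set [l]
   in the fibre over [x] and a point [b] over [y], push [l] along group elements
   [T n] with [T n a0 -> b] ([a0] over [x], by density of orbits) and pass to a
   common convergent subsequence: the limits lie over [y] (equivariance and
   continuity of [pi]) and are still [delta]-separated (continuity of the action). *)
Lemma separated_set_transport {Y : Type} (dY : Y -> Y -> R) (actY : G -> Y -> Y) (pi : X -> Y) :
  minimal_action d act ->
  is_metric dY -> metric_continuous d dY pi -> (forall y, exists x, pi x = y) ->
  (forall t x, pi (act t x) = actY t (pi x)) ->
  forall x y delta l, 0 < delta -> sep_fiber_set d act pi x delta l ->
  exists l', sep_fiber_set d act pi y delta l' /\ length l' = length l.
Proof.
  intros Hmin HdY Hpi Hsurj Hequiv x y delta l Hdelta [Hnd [Hfib Hsep]].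
  pose proof (proj1 HX) as Hd. pose proof Hd as [_ [Hzero _]].
  pose proof Hact as [Hunit [Hcomp _]].
  destruct (Hsurj x) as [a0 Ha0]. destruct (Hsurj y) as [b Hb].
  destruct (choice (fun n t => d b (act t a0) < / INR (S n))) as [T HT].
  { intro n. apply (minimal_orbit_dense Hmin), inv_succ_pos. }
  destruct (compact_simultaneous_subseq d HX (fun a n => act (T n) a) l) as [phi [Hphi Hlim]].
  destruct (choice (fun a z => In a l -> converges d (fun n => act (T (phi n)) a) z)) as [f Hf].
  { intro a. destruct (classic (In a l)) as [Ha|Ha].
    - destruct (Hlim a Ha) as [z Hz]. exists z. intros _. exact Hz.
    - exists a. intro; contradiction. }
  assert (Hfy : forall a, In a l -> pi (f a) = y).
  { intros a Ha. subst y.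
    apply (limits_of_equal_sequences dY (fun n => pi (act (T (phi n)) a))
                                        (fun n => pi (act (T (phi n)) a0)) _ _ HdY).
    - intro n. rewrite !Hequiv, Hfib, Ha0 by exact Ha. reflexivity.
    - apply (converges_continuous d dY pi _ _ Hpi), Hf, Ha.
    - apply (converges_continuous d dY pi _ _ Hpi).
      apply (converges_subseq d (fun n => act (T n) a0)); [|exact Hphi].
      apply converges_of_inv_succ, HT. }
  assert (Hfsep : forall a c, In a l -> In c l -> a <> c ->
                    forall s, delta <= d (act s (f a)) (act s (f c))).
  { intros a c Ha Hc Hac s.
    apply (converges_dist_lower_bound d (fun n => act s (act (T (phi n)) a))
                                        (fun n => act s (act (T (phi n)) c)) _ _ _ Hd).
    - apply (converges_continuous d d (act s) _ _ (act_continuous s)), Hf, Ha.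
    - apply (converges_continuous d d (act s) _ _ (act_continuous s)), Hf, Hc.
    - intro n. rewrite <- !Hcomp. apply Hsep; assumption. }
  exists (map f l). split; [split; [|split]|apply length_map].
  - apply NoDup_map_NoDup_ForallPairs; [|exact Hnd].
    intros a c Ha Hc Hfac. apply NNPP. intro Hac.
    specialize (Hfsep a c Ha Hc Hac e). rewrite !Hunit, Hfac, (proj2 (Hzero _ _) eq_refl) in Hfsep.
    lra.
  - intros w Hw. apply in_map_iff in Hw as [a [<- Ha]]. apply Hfy, Ha.
  - intros w1 w2 Hw1 Hw2 Hne t.
    apply in_map_iff in Hw1 as [a [<- Ha]]. apply in_map_iff in Hw2 as [c [<- Hc]].
    apply Hfsep; [exact Ha|exact Hc|]. intro; subst; apply Hne; reflexivity.
Qed.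

End Dynamics.

Lemma equicontinuous_proximal_eq {G Y : Type} (op : G -> G -> G) (e : G) (inv : G -> G)
  (dY : Y -> Y -> R) (actY : G -> Y -> Y) :
  is_metric dY -> equicontinuous dY actY ->
  (forall y, actY e y = y) -> (forall g h y, actY (op g h) y = actY g (actY h y)) ->
  (forall a, op (inv a) a = e) ->
  forall p q, proximal dY actY p q -> p = q.
Proof.
  intros HdY Heq Hunit Hcomp Hinv p q Hprox. apply (metric_eq_of_small dY HdY).
  intros eps Heps. destruct (Heq eps Heps) as [eta [Heta Hequi]].
  destruct (Hprox eta Heta) as [t Ht].
  specialize (Hequi _ _ Ht (inv t)). rewrite <- !Hcomp, Hinv, !Hunit in Hequi. exact Hequi.
Qed.

Section SeparatedSets.

Context {G X Y : Type}.
Variables (d : X -> X -> R) (act : G -> X -> X) (pi : X -> Y).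
Hypothesis Hd : is_metric d.

Lemma sep_weaken (y : Y) (delta delta' : R) (l : list X) :
  delta' <= delta -> sep_fiber_set d act pi y delta l -> sep_fiber_set d act pi y delta' l.
Proof.
  intros Hle [Hnd [Hfib Hsep]]. split; [exact Hnd|split; [exact Hfib|]].
  intros a b Ha Hb Hab t. specialize (Hsep a b Ha Hb Hab t). lra.
Qed.

Lemma not_proximal_bounded_below (a b : X) :
  ~ proximal d act a b -> exists r, 0 < r /\ forall t, r <= d (act t a) (act t b).
Proof.
  intro Hnp. apply NNPP; intro Hno. apply Hnp. intros eps Heps.
  apply NNPP; intro Hnt. apply Hno. exists eps. split; [exact Heps|].
  intro t. apply Rnot_lt_le. intro Ht. apply Hnt. exists t; exact Ht.
Qed.

Lemma sep_extend (y : Y) (delta : R) (l : list X) (a : X) :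
  0 < delta -> sep_fiber_set d act pi y delta l -> pi a = y -> ~ In a l ->
  (forall b, In b l -> ~ proximal d act a b) ->
  exists delta', 0 < delta' /\ delta' <= delta /\ sep_fiber_set d act pi y delta' (a :: l).
Proof.
  intros Hdelta [Hnd [Hfib Hsep]] Ha Hnin Hnp. pose proof Hd as [_ [_ [Hsym _]]].
  destruct (list_common_threshold (fun b r => forall t, r <= d (act t a) (act t b)) l)
    as [r [Hr Hfar]].
  { intros b r r' Hb Hle t. specialize (Hb t). lra. }
  { intros b Hb. apply not_proximal_bounded_below, Hnp, Hb. }
  pose proof (Rmin_l delta r). pose proof (Rmin_r delta r).
  exists (Rmin delta r). split; [apply Rmin_pos; assumption|split; [assumption|]].
  split; [constructor; assumption|split].
  - intros w [<-|Hw]; [exact Ha|apply Hfib, Hw].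
  - intros u v [<-|Hu] [<-|Hv] Huv t.
    + contradiction.
    + specialize (Hfar v Hv t). lra.
    + specialize (Hfar u Hu t). rewrite Hsym. lra.
    + specialize (Hsep u v Hu Hv Huv t). lra.
Qed.

(* If separated sets can be transported between fibres and some fibre is finite,
   the number [cr(x, delta)] is, for all small [delta], one constant independent
   of [x]: the largest size of a separated set in any fibre at any threshold. *)
Lemma coincidence_rank_uniform (y0 : Y) (m0 : nat) :
  (forall x y delta l, 0 < delta -> sep_fiber_set d act pi x delta l ->
     exists l', sep_fiber_set d act pi y delta l' /\ length l' = length l) ->
  fiber_card pi y0 m0 ->
  exists cr delta0, 0 < delta0 /\
    forall x delta, 0 < delta -> delta < delta0 -> cr_at d act pi x delta cr.
Proof.
  intros Htransport [L0 [HL0nd [HL0len HL0fib]]].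
  set (attained := fun k => exists delta x l,
         0 < delta /\ sep_fiber_set d act pi x delta l /\ length l = k).
  destruct (bounded_max attained m0) as [cr [[delta0 [x1 [l1 [Hdelta0 [Hsep1 Hlen1]]]]] Hmax]].
  - exists 1, y0, nil. split; [lra|split; [|reflexivity]].
    split; [constructor|split; [intros x []|intros a b []]].
  - (* every separated set moves into the fibre over [y0], which has [m0] points *)
    intros k [delta [x [l [Hdelta [Hsep Hlen]]]]].
    destruct (Htransport x y0 delta l Hdelta Hsep) as [l' [Hsep' Hlen']].
    rewrite <- Hlen, <- Hlen', <- HL0len. apply NoDup_incl_length; [apply Hsep'|].
    intros a Ha. apply HL0fib, Hsep', Ha.
  - exists cr, delta0. split; [exact Hdelta0|]. intros x delta Hdelta Hlt. split.
    + destruct (Htransport x1 x delta l1 Hdelta) as [l' [Hsep' Hlen']].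
      { apply (sep_weaken x1 delta0); [lra|exact Hsep1]. }
      exists l'. split; [exact Hsep'|lia].
    + intros l Hsep. apply Hmax. exists delta, x, l. split; [exact Hdelta|split; auto].
Qed.

Variables (cr : nat) (delta0 : R).
Hypothesis Hdelta0 : 0 < delta0.
Hypothesis Hcr : forall x delta, 0 < delta -> delta < delta0 -> cr_at d act pi x delta cr.

(* Over a fibre-distal point, a maximal separated set must exhaust the fibre
   (otherwise it would extend), so the fibre has exactly [cr] points. *)
Lemma fiber_distal_card (x : Y) : fiber_distal d act pi x -> fiber_card pi x cr.
Proof.
  intro Hdistal. destruct (Hcr x (delta0/2)) as [[l0 [Hsep0 Hlen0]] _]; [lra|lra|].
  exists l0. split; [apply Hsep0|split; [exact Hlen0|]].
  intro a. split; [|apply Hsep0]. intro Ha. apply NNPP. intro Hnin.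
  destruct (sep_extend x (delta0/2) l0 a) as [delta' [Hdelta' [Hle Hsep']]]; try assumption.
  - lra.
  - intros b Hb Hprox. apply Hnin. rewrite <- (Hdistal a Ha b Hprox). exact Hb.
  - destruct (Hcr x delta') as [_ Hbound]; [exact Hdelta'|lra|].
    specialize (Hbound _ Hsep'). simpl in Hbound. lia.
Qed.

(* Conversely, when proximal points share a fibre, a fibre with exactly [cr]
   points is a separated set, so it contains no proximal pair. *)
Lemma card_fiber_distal (x : Y) :
  (forall a b, proximal d act a b -> pi b = pi a) ->
  fiber_card pi x cr -> fiber_distal d act pi x.
Proof.
  intros Hprox_fib [L [HLnd [HLlen HLfib]]].
  destruct (Hcr x (delta0/2)) as [[l0 [[Hnd0 [Hfib0 Hsep0]] Hlen0]] _]; [lra|lra|].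
  assert (Hincl : incl L l0).
  { apply NoDup_length_incl; [exact Hnd0|lia|]. intros a Ha. apply HLfib, Hfib0, Ha. }
  intros a Ha b Hprox. apply NNPP. intro Hne.
  assert (Hb : pi b = x) by (rewrite (Hprox_fib a b Hprox); exact Ha).
  destruct (Hprox (delta0/2)) as [t Ht]; [lra|].
  assert (Hsep : delta0/2 <= d (act t a) (act t b)).
  { apply Hsep0; [apply Hincl, HLfib, Ha|apply Hincl, HLfib, Hb|].
    intro E. apply Hne. symmetry. exact E. }
  lra.
Qed.

(* Every fibre contains a separated set of [cr] points, hence has at least [cr] points. *)
Lemma cr_le_fiber_card (y : Y) (m : nat) : fiber_card pi y m -> (cr <= m)%nat.
Proof.
  intros [L [HLnd [HLlen HLfib]]].
  destruct (Hcr y (delta0/2)) as [[l0 [Hsep0 Hlen0]] _]; [lra|lra|].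
  rewrite <- Hlen0, <- HLlen. apply NoDup_incl_length; [apply Hsep0|].
  intros a Ha. apply HLfib, Hsep0, Ha.
Qed.

End SeparatedSets.

Theorem mainTheorem2
  (G : Type) (op : G -> G -> G) (e : G) (inv : G -> G) (opn : (G -> Prop) -> Prop)
  (X : Type) (d : X -> X -> R) (act : G -> X -> X)
  (Xmax : Type) (dmax : Xmax -> Xmax -> R) (actmax : G -> Xmax -> Xmax)
  (pimax : X -> Xmax)
  (HG : is_LCA_group op e inv opn)
  (HX : compact_metric_space d)
  (Hact : is_continuous_action op e opn d act)
  (Hmin : minimal_action d act)
  (Hmef : is_max_equicontinuous_factor op e opn d act dmax actmax pimax)
  (Hmr : finite_min_rank pimax) :
  exists cr : nat,
    (* cr = lim_{delta->0+} cr(x, delta), for every x in Xmax *)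
    (forall x0 : Xmax, cr_limit d act pimax x0 cr) /\
    (* cr = #pi^{-1}(x) for every fiber distal x *)
    (forall x : Xmax, fiber_distal d act pimax x -> fiber_card pimax x cr) /\
    (* X_max^distal = {x : #pi^{-1}(x) = cr} *)
    (forall x : Xmax, fiber_distal d act pimax x <-> fiber_card pimax x cr) /\
    (* cr = mr whenever a fiber distal point exists *)
    ((exists x : Xmax, fiber_distal d act pimax x) -> min_rank pimax cr).
Proof.
  destruct Hmef as [[Hcmax [[HYunit [HYcomp _]] [Hpi [Hsurj Hequiv]]]] [Hequi _]].
  pose proof (proj1 Hcmax) as HdY.
  destruct HG as [[_ [_ [_ Hinv]]] _].
  destruct Hmr as [y0 [m0 Hy0]].
  assert (Hprox_fib : forall a b, proximal d act a b -> pimax b = pimax a).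
  { intros a b Hprox. symmetry.
    apply (equicontinuous_proximal_eq op e inv dmax actmax HdY Hequi HYunit HYcomp Hinv).
    apply (factor_preserves_proximal d act HX dmax actmax pimax HdY Hpi Hequiv), Hprox. }
  destruct (coincidence_rank_uniform d act pimax y0 m0) as [cr [delta0 [Hdelta0 Hcr]]].
  { apply (separated_set_transport op e opn d act HX Hact dmax actmax pimax); assumption. }
  { exact Hy0. }
  pose proof (fiber_distal_card d act pimax (proj1 HX) cr delta0 Hdelta0 Hcr) as Hdistal_card.
  exists cr. split; [|split; [|split]].
  - intro x0. exists delta0. split; [exact Hdelta0|]. intros; apply Hcr; assumption.
  - exact Hdistal_card.
  - intro x. split; [apply Hdistal_card|].
    exact (card_fiber_distal d act pimax cr delta0 Hdelta0 Hcr x Hprox_fib).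
  - intros [x Hx]. split; [exists x; exact (Hdistal_card x Hx)|].
    exact (cr_le_fiber_card d act pimax cr delta0 Hdelta0 Hcr).
Qed.
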